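(* Let $\rho(\mathbf{x})\in[0,1]$ be the responsiveness of a prediction at $\mathbf{x}$ and fix $\varepsilon\in(0,1)$ and $\alpha\in(0,1)$. Consider testing $H_0:\rho(\mathbf{x})\ge\varepsilon$ versus $H_1:\rho(\mathbf{x})<\varepsilon$ using $n$ i.i.d. reachable points, with empirical responsiveness $\hat\rho_n\in\{0,1/n,\dots,1\}$, by rejecting $H_0$ iff $\mathsf{B}_{1-\alpha}(n\hat\rho_n+1,\ n-n\hat\rho_n)<\varepsilon$, where $\mathsf{B}_q(a,b)$ is the $q$-th quantile of the Beta$(a,b)$ distribution. Then rejecting $H_0$ implies $$n>\frac{\log\alpha}{\log(1-\varepsilon)}.$$
   Context: The responsiveness is $\rho(\mathbf{x})=\Pr[f(\mathbf{x}')\in\mathcal{Y}_T(\mathbf{x})]$ for $\mathbf{x}'$ drawn from a distribution $\mathbb{P}^{\mathrm{reach}}_{\mathbf{x}}$ over points reachable from $\mathbf{x}$ under interventions, where $f$ is a model and $\mathcal{Y}_T(\mathbf{x})$ a target prediction set; $\hat\rho_n$ is the fraction of the $n$ sampled points whose prediction lies in $\mathcal{Y}_T(\mathbf{x})$. A Beta distribution with second parameter $0$ is the point mass at $1$. *)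

From Stdlib Require Import Reals.
From Coquelicot Require Import Coquelicot.
Open Scope R_scope.

Definition beta_kernel (a b : nat) (t : R) : R :=
  t ^ (a - 1) * (1 - t) ^ (b - 1).

(* CDF of the Beta(a,b) distribution (integer parameters).
   Convention (from the paper): Beta(a,0) is the point mass at 1. *)
Definition beta_cdf (a b : nat) (x : R) : R :=
  match b with
  | O => if Rlt_dec x 1 then 0 else 1
  | S _ =>
      if Rlt_dec x 0 then 0
      else if Rle_dec 1 x then 1
      else RInt (beta_kernel a b) 0 x / RInt (beta_kernel a b) 0 1
  end.

Definition beta_quantile (q : R) (a b : nat) : Rbar :=
  Glb_Rbar (fun x => q <= beta_cdf a b x).

(* Rejection rule of the test H0 : rho >= eps vs H1 : rho < eps, with
   n * rho_hat = k successes among n samples: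
   reject iff B_{1-alpha}(n rho_hat + 1, n - n rho_hat) < eps. *)
Definition rejects_H0 (n k : nat) (alpha eps : R) : Prop :=
  Rbar_lt (beta_quantile (1 - alpha) (k + 1) (n - k)) (Finite eps).

(** The rejection rule yields a point [x < eps] at which the Beta(k+1, n-k)
    distribution function is at least [1 - alpha].  That distribution function
    is at most [1 - (1 - x)^n] on [[0, 1)]: the affine substitution
    [t = (1 - x) s + x] maps [[0, 1]] onto [[x, 1]] and shrinks the Beta kernel
    by at most the factor [(1 - x)^(n-1)], so the mass of [[x, 1]] is at least
    [(1 - x)^n].  Hence [(1 - eps)^n < (1 - x)^n <= alpha], and taking
    logarithms (with [ln (1 - eps) < 0]) gives the bound on [n]. *)

From Stdlib Require Import Reals Lra Lia Classical.
From Coquelicot Require Import Coquelicot.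
Open Scope R_scope.

Lemma Glb_Rbar_lt_ex (E : R -> Prop) (c : R) :
  Rbar_lt (Glb_Rbar E) c -> exists x, E x /\ x < c.
Proof.
  intros Hlt.
  apply NNPP; intros Hnone.
  apply (Rbar_lt_not_le _ _ Hlt).
  apply (proj2 (Glb_Rbar_correct E)).
  intros y Ey; simpl.
  apply Rnot_lt_le; intros Hy.
  apply Hnone; now exists y.
Qed.

Lemma pow_lt_compat_l (a b : R) (n : nat) :
  0 <= a < b -> (0 < n)%nat -> a ^ n < b ^ n.
Proof.
  intros Hab Hn.
  induction n as [|n IH]; [lia|].
  destruct n as [|n]; [simpl; lra|].
  assert (IHn : a ^ S n < b ^ S n) by (apply IH; lia).
  assert (0 <= a ^ S n) by (apply pow_le; lra).
  simpl in *; nra.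
Qed.

Lemma INR_gt_ln_div_of_pow_lt (c alpha : R) (n : nat) :
  0 < c < 1 -> 0 < alpha -> c ^ n < alpha -> INR n > ln alpha / ln c.
Proof.
  intros Hc Ha Hlt.
  assert (Hln : INR n * ln c < ln alpha).
  { rewrite <- ln_pow by lra. apply ln_increasing; [apply pow_lt|]; lra. }
  assert (Hc0 : ln c < 0) by (rewrite <- ln_1; apply ln_increasing; lra).
  apply Rlt_gt, (Rmult_lt_reg_r (- ln c)); [lra|].
  replace (ln alpha / ln c * - ln c) with (- ln alpha) by (field; lra).
  lra.
Qed.

Lemma continuous_beta_kernel (a b : nat) (t : R) :
  continuous (beta_kernel a b) t.
Proof.
  apply (@ex_derive_continuous R_AbsRing R_NormedModule).
  unfold beta_kernel; auto_derive; trivial.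
Qed.

Lemma ex_RInt_beta_kernel (a b : nat) (u v : R) :
  ex_RInt (beta_kernel a b) u v.
Proof.
  apply (@ex_RInt_continuous R_CompleteNormedModule).
  intros; apply continuous_beta_kernel.
Qed.

Lemma RInt_beta_kernel_gt0 (a b : nat) : 0 < RInt (beta_kernel a b) 0 1.
Proof.
  apply RInt_gt_0; [lra| |intros; apply continuous_beta_kernel].
  intros t Ht; unfold beta_kernel.
  apply Rmult_lt_0_compat; apply pow_lt; lra.
Qed.

Lemma beta_kernel_affine_ge (a b : nat) (x s : R) :
  0 <= x <= 1 -> 0 <= s <= 1 ->
  (1 - x) ^ ((a - 1) + (b - 1)) * beta_kernel a b s
    <= beta_kernel a b ((1 - x) * s + x).
Proof.
  intros Hx Hs; unfold beta_kernel.
  replace (1 - ((1 - x) * s + x)) with ((1 - x) * (1 - s)) by ring.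
  rewrite pow_add, Rpow_mult_distr.
  replace ((1 - x) ^ (a - 1) * (1 - x) ^ (b - 1) * (s ^ (a - 1) * (1 - s) ^ (b - 1)))
    with (((1 - x) * s) ^ (a - 1) * ((1 - x) ^ (b - 1) * (1 - s) ^ (b - 1)))
    by (rewrite Rpow_mult_distr; ring).
  apply Rmult_le_compat_r.
  - apply Rmult_le_pos; apply pow_le; lra.
  - apply pow_incr; split; [apply Rmult_le_pos|]; lra.
Qed.

Lemma RInt_beta_kernel_tail_ge (a b : nat) (x : R) :
  0 <= x <= 1 ->
  (1 - x) ^ S ((a - 1) + (b - 1)) * RInt (beta_kernel a b) 0 1
    <= RInt (beta_kernel a b) x 1.
Proof.
  intros Hx.
  set (K := beta_kernel a b).
  set (N := ((a - 1) + (b - 1))%nat).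
  set (Kx := fun s => K ((1 - x) * s + x)).
  assert (HKx : ex_RInt Kx 0 1).
  { apply (@ex_RInt_continuous R_CompleteNormedModule); intros.
    apply (continuous_comp (fun s => (1 - x) * s + x) K);
      [|apply continuous_beta_kernel].
    apply (@ex_derive_continuous R_AbsRing R_NormedModule); auto_derive; trivial. }
  assert (Hsubst : RInt K x 1 = (1 - x) * RInt Kx 0 1).
  { replace (RInt K x 1) with (RInt K ((1 - x) * 0 + x) ((1 - x) * 1 + x))
      by (f_equal; ring).
    rewrite <- RInt_comp_lin by apply ex_RInt_beta_kernel.
    now rewrite RInt_scal. }
  assert (Hshrink : (1 - x) ^ N * RInt K 0 1 <= RInt Kx 0 1).
  { change ((1 - x) ^ N * RInt K 0 1) with (scal ((1 - x) ^ N) (RInt K 0 1)).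
    rewrite <- RInt_scal by apply ex_RInt_beta_kernel.
    apply RInt_le; [lra| |exact HKx|].
    - apply (@ex_RInt_scal R_NormedModule), ex_RInt_beta_kernel.
    - intros s Hs; apply beta_kernel_affine_ge; lra. }
  rewrite Hsubst; change ((1 - x) ^ S N) with ((1 - x) * (1 - x) ^ N).
  rewrite Rmult_assoc.
  apply Rmult_le_compat_l; [lra|exact Hshrink].
Qed.

Lemma beta_cdf_neg (a b : nat) (x : R) : x < 0 -> beta_cdf a b x = 0.
Proof.
  intros Hx; unfold beta_cdf.
  destruct b; destruct Rlt_dec; lra.
Qed.

Lemma beta_cdf_le_1_minus_pow (p b : nat) (x : R) :
  0 <= x < 1 -> beta_cdf (S p) b x <= 1 - (1 - x) ^ (p + b).
Proof.
  intros Hx.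
  assert (Hpow1 : (1 - x) ^ (p + b) <= 1).
  { rewrite <- (pow1 (p + b)) at 2; apply pow_incr; lra. }
  unfold beta_cdf; destruct b as [|q].
  { destruct Rlt_dec; lra. }
  destruct Rlt_dec; [lra|]; destruct Rle_dec; [lra|].
  set (K := beta_kernel (S p) (S q)).
  assert (HI := RInt_beta_kernel_gt0 (S p) (S q)); fold K in HI.
  assert (Htail := RInt_beta_kernel_tail_ge (S p) (S q) x ltac:(lra)); fold K in Htail.
  replace (S ((S p - 1) + (S q - 1))) with (p + S q)%nat in Htail by lia.
  assert (Hchasles : RInt K 0 x + RInt K x 1 = RInt K 0 1)
    by (apply (RInt_Chasles K); apply ex_RInt_beta_kernel).
  apply (Rmult_le_reg_r (RInt K 0 1)); [exact HI|].
  unfold Rdiv; rewrite Rmult_assoc, Rinv_l, Rmult_1_r by lra.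
  lra.
Qed.

Theorem mainTheorem3 (n k : nat) (rho_hat alpha eps : R) :
  (1 <= n)%nat -> (k <= n)%nat ->
  rho_hat = INR k / INR n ->
  0 < eps < 1 -> 0 < alpha < 1 ->
  rejects_H0 n k alpha eps ->
  INR n > ln alpha / ln (1 - eps).
Proof.
  intros Hn Hk _ Heps Halpha Hrej.
  destruct (Glb_Rbar_lt_ex _ _ Hrej) as [x [Hcdf Hxeps]].
  assert (Hx0 : 0 <= x).
  { apply Rnot_lt_le; intros Hx.
    rewrite beta_cdf_neg in Hcdf by exact Hx; lra. }
  assert (Hbound := beta_cdf_le_1_minus_pow k (n - k) x ltac:(lra)).
  rewrite <- Nat.add_1_r in Hbound.
  replace (k + (n - k))%nat with n in Hbound by lia.
  apply INR_gt_ln_div_of_pow_lt; [lra|lra|].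
  apply Rlt_le_trans with ((1 - x) ^ n).
  - apply pow_lt_compat_l; [lra|lia].
  - lra.
Qed.
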